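(* Let $\Delta$ be a finite saturated sample set, $\delta$ a $\Delta$-diagram, and $t$ a basic term. If the time warp $f$ strongly extends $D_t(\delta)$, then $f^\star$ strongly extends $D_{t'}(\delta)$.
   Context: Time warps: join-preserving maps $f\colon\omega^+\to\omega^+$, $\omega^+=\omega\cup\{\omega\}$, ordered pointwise; $p(m)=\bigvee\{k\in\omega\mid k<m\}$; $f^\star$ is the largest time warp $h$ with $f\circ h\le p$; $\mathrm{last}(f)=\min\{m\in\omega^+\mid f(m)=f(\omega)\}$. Basic terms are built from variables using $\cdot,{}',1$. Samples (formal expressions): $\alpha::=\kappa\mid t[\alpha]\mid \mathrm{suc}(\alpha)\mid\mathrm{last}(t)$ with $\kappa$ a time variable and $t$ a basic term. The relation $\leadsto$: $t[\alpha]\leadsto\alpha$, $\mathrm{suc}(\alpha)\leadsto\alpha$, $t[\alpha]\leadsto t[\mathrm{last}(t)]$, $(tu)[\alpha]\leadsto t[u[\alpha]]$, $t'[\alpha]\leadsto t[t'[\alpha]]$, $t'[\alpha]\leadsto t[\mathrm{suc}(t'[\alpha])]$; a sample set is saturated if closed under $\leadsto$. $S(n)=n+1$ for $n\in\omega$, $S(\omega)=\omega$. For saturated $\Delta$, a $\Delta$-diagram is $\delta\colon\Delta\to\omega^+$ such that, whenever the samples mentioned belong to $\Delta$: (1) $\delta(\alpha)\le\delta(\beta)\Rightarrow\delta(t[\alpha])\le\delta(t[\beta])$; (2) $\delta(\alpha)=0\Rightarrow\delta(t[\alpha])=0$; (3) $\delta(\mathrm{suc}(\alpha))=S(\delta(\alpha))$;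 (4) for $t[\alpha]\in\Delta$: $\delta(\mathrm{last}(t))\le\delta(\alpha)\iff\delta(t[\mathrm{last}(t)])=\delta(t[\alpha])$; (5) $\delta(\mathrm{last}(t))=\omega\Rightarrow\delta(t[\mathrm{last}(t)])=\omega$; (6) $\delta(1[\alpha])=\delta(\alpha)$; (7) $\delta(\mathrm{last}(1))=\omega$; (8) $\delta((tu)[\alpha])=\delta(t[u[\alpha]])$; (9) $\delta(\mathrm{last}(tu))=\omega\Rightarrow\delta(\mathrm{last}(t))=\delta(\mathrm{last}(u))=\omega$; (10) for $t'[\alpha]\in\Delta$: $0<\delta(\alpha)<\omega\Rightarrow\delta(t[t'[\alpha]])<\delta(\alpha)$; (11) for $t'[\alpha]\in\Delta$: $\delta(t'[\alpha])<\omega\Rightarrow\delta(\alpha)\le\delta(t[\mathrm{suc}(t'[\alpha])])$; (12) $\delta(\mathrm{last}(t'))=\omega\Rightarrow\delta(\mathrm{last}(t))=\omega$. For a basic term $t$, $D_t(\delta)=\{(\delta(\alpha),\delta(t[\alpha]))\mid t[\alpha]\in\Delta\}$. A time warp $f$ extends $D_t(\delta)$ if $f(i)=j$ for all $(i,j)\in D_t(\delta)$, and strongly extends it if moreover $D_t(\delta)\neq\emptyset$ and $\delta(\mathrm{last}(t))=\omega$ together imply $\mathrm{last}(f)=\omega$. *)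

From Stdlib Require Import List.

Inductive omegap : Type := Fin (n : nat) | Omega.

Definition leo (x y : omegap) : Prop :=
  match x, y with
  | Fin m, Fin n => m <= n
  | _, Omega => True
  | Omega, Fin _ => False
  end.

Definition lto (x y : omegap) : Prop := leo x y /\ x <> y.

Definition is_ub (S : omegap -> Prop) (x : omegap) : Prop :=
  forall y, S y -> leo y x.
Definition is_lub (S : omegap -> Prop) (x : omegap) : Prop :=
  is_ub S x /\ forall z, is_ub S z -> leo x z.

Definition time_warp (f : omegap -> omegap) : Prop :=
  forall (S : omegap -> Prop) (x : omegap),
    is_lub S x -> is_lub (fun y => exists z, S z /\ y = f z) (f x).

(* p(m) = \/ {k in omega | k < m} *)
Definition pred_warp (m : omegap) : omegap :=
  match m with
  | Fin 0 => Fin 0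
  | Fin (S n) => Fin n
  | Omega => Omega
  end.

Definition is_star (f h : omegap -> omegap) : Prop :=
  time_warp h /\ (forall m, leo (f (h m)) (pred_warp m)) /\
  (forall h', time_warp h' -> (forall m, leo (f (h' m)) (pred_warp m)) ->
     forall m, leo (h' m) (h m)).

Definition is_last (f : omegap -> omegap) (m : omegap) : Prop :=
  f m = f Omega /\ forall k, f k = f Omega -> leo m k.

Definition succo (x : omegap) : omegap :=
  match x with Fin n => Fin (S n) | Omega => Omega end.

Inductive term : Type :=
| TVar (x : nat)
| TMul (t u : term)
| TPrime (t : term)
| TOne.

Inductive sample : Type :=
| SVar (k : nat)
| SApp (t : term) (a : sample)
| SSuc (a : sample)
| SLast (t : term).

Inductive leadsto : sample -> sample -> Prop :=
| ls_app t a : leadsto (SApp t a) a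
| ls_suc a : leadsto (SSuc a) a
| ls_last t a : leadsto (SApp t a) (SApp t (SLast t))
| ls_mul t u a : leadsto (SApp (TMul t u) a) (SApp t (SApp u a))
| ls_prime1 t a : leadsto (SApp (TPrime t) a) (SApp t (SApp (TPrime t) a))
| ls_prime2 t a :
    leadsto (SApp (TPrime t) a) (SApp t (SSuc (SApp (TPrime t) a))).

Definition saturated (D : sample -> Prop) : Prop :=
  forall a b, leadsto a b -> D a -> D b.

Definition finite_set (D : sample -> Prop) : Prop :=
  exists l : list sample, forall a, D a <-> In a l.

Definition diagram (D : sample -> Prop) (d : sample -> omegap) : Prop :=
  (* (1) *)
  (forall t a b, D (SApp t a) -> D (SApp t b) -> D a -> D b ->
     leo (d a) (d b) -> leo (d (SApp t a)) (d (SApp t b))) /\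
  (* (2) *)
  (forall t a, D (SApp t a) -> D a -> d a = Fin 0 -> d (SApp t a) = Fin 0) /\
  (* (3) *)
  (forall a, D (SSuc a) -> D a -> d (SSuc a) = succo (d a)) /\
  (* (4) *)
  (forall t a, D (SApp t a) -> D (SLast t) -> D a -> D (SApp t (SLast t)) ->
     (leo (d (SLast t)) (d a) <-> d (SApp t (SLast t)) = d (SApp t a))) /\
  (* (5) *)
  (forall t, D (SLast t) -> D (SApp t (SLast t)) ->
     d (SLast t) = Omega -> d (SApp t (SLast t)) = Omega) /\
  (* (6) *)
  (forall a, D (SApp TOne a) -> D a -> d (SApp TOne a) = d a) /\
  (* (7) *)
  (D (SLast TOne) -> d (SLast TOne) = Omega) /\
  (* (8) *)
  (forall t u a, D (SApp (TMul t u) a) -> D (SApp t (SApp u a)) ->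
     d (SApp (TMul t u) a) = d (SApp t (SApp u a))) /\
  (* (9) *)
  (forall t u, D (SLast (TMul t u)) -> D (SLast t) -> D (SLast u) ->
     d (SLast (TMul t u)) = Omega -> d (SLast t) = Omega /\ d (SLast u) = Omega) /\
  (* (10) *)
  (forall t a, D (SApp (TPrime t) a) -> D a -> D (SApp t (SApp (TPrime t) a)) ->
     lto (Fin 0) (d a) -> lto (d a) Omega ->
     lto (d (SApp t (SApp (TPrime t) a))) (d a)) /\
  (* (11) *)
  (forall t a, D (SApp (TPrime t) a) -> D a ->
     D (SApp t (SSuc (SApp (TPrime t) a))) ->
     lto (d (SApp (TPrime t) a)) Omega ->
     leo (d a) (d (SApp t (SSuc (SApp (TPrime t) a))))) /\
  (* (12) *)
  (forall t, D (SLast (TPrime t)) -> D (SLast t) ->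
     d (SLast (TPrime t)) = Omega -> d (SLast t) = Omega).

Definition Dt (D : sample -> Prop) (d : sample -> omegap) (t : term)
  (i j : omegap) : Prop :=
  exists a, D (SApp t a) /\ i = d a /\ j = d (SApp t a).

Definition extends (D : sample -> Prop) (d : sample -> omegap) (t : term)
  (f : omegap -> omegap) : Prop :=
  forall i j, Dt D d t i j -> f i = j.

Definition strongly_extends (D : sample -> Prop) (d : sample -> omegap)
  (t : term) (f : omegap -> omegap) : Prop :=
  extends D d t f /\
  ((exists i j, Dt D d t i j) -> d (SLast t) = Omega -> is_last f Omega).

(* f^star is the right adjoint of f shifted by one: f k <= n iff
   k <= f^star (n+1), so f^star (n+1) is the largest k with f k <= n.  For
   t'[a] with delta(a) = n+1, diagram condition (10) shows that j = delta(t'[a])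
   satisfies f j <= n, and condition (11) that f (j+1) > n; hence
   f^star (n+1) = j.  The case delta(a) = 0 is (2), and the case delta(a) = omega
   is reduced to the finite one through the sample t'[last(t')] and (4), (5).
   Finally, last(f) = omega forces f^star to reach omega only at omega, and
   condition (12) transfers the hypothesis on last(t') to last(t). *)

From Stdlib Require Import Classical Lia Arith.

Lemma leo_refl x : leo x x.
Proof. destruct x; simpl; auto. Qed.

Lemma leo_trans x y z : leo x y -> leo y z -> leo x z.
Proof. destruct x, y, z; simpl; tauto || lia. Qed.

Lemma leo_antisym x y : leo x y -> leo y x -> x = y.
Proof. destruct x, y; simpl; intros; f_equal; tauto || lia. Qed.

Lemma leo_Omega x : leo x Omega.
Proof. destruct x; exact I. Qed.

Lemma Omega_leo x : leo Omega x -> x = Omega.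
Proof. destruct x; simpl; easy. Qed.

Lemma leo0 x : leo (Fin 0) x.
Proof. destruct x; simpl; auto; lia. Qed.

Lemma leo_Fin_or x n : leo x (Fin n) \/ leo (Fin (S n)) x.
Proof. destruct x; simpl; auto; lia. Qed.

Lemma lto_Fin_S x n : lto x (Fin (S n)) -> leo x (Fin n).
Proof.
  intros [Hle Hneq]. destruct x as [m|]; simpl in *; [|exact Hle].
  assert (m <> S n) by congruence. lia.
Qed.

Section TimeWarp.

Variable g : omegap -> omegap.
Hypothesis g_warp : time_warp g.

Lemma time_warp0 : g (Fin 0) = Fin 0.
Proof.
  destruct (g_warp (fun _ => False) (Fin 0)) as [_ Hlub].
  - split; [intros y []|intros z _; apply leo0].
  - apply leo_antisym; [|apply leo0].
    apply Hlub. intros y [z [[] _]].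
Qed.

Lemma time_warp_mono x y : leo x y -> leo (g x) (g y).
Proof.
  intros Hxy. destruct (g_warp (fun z => z = x \/ z = y) y) as [Hub _].
  - split; [intros z [-> | ->]; auto using leo_refl|intros z Hz; apply Hz; auto].
  - apply Hub. exists x. auto.
Qed.

Lemma time_warp_Omega_le z : (forall n, leo (g (Fin n)) z) -> leo (g Omega) z.
Proof.
  intros Hz. destruct (g_warp (fun y => exists n, y = Fin n) Omega) as [_ Hlub].
  - split; [intros y _; apply leo_Omega|].
    intros [m|] Hm; simpl; auto.
    specialize (Hm (Fin (S m)) (ex_intro _ _ eq_refl)). simpl in Hm. lia.
  - apply Hlub. intros y [w [[n ->] ->]]. auto.
Qed.

Lemma is_last_Omega_neq : is_last g Omega -> forall n, g (Fin n) <> g Omega.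
Proof. intros [_ Hmin] n Hn. exact (Hmin _ Hn). Qed.

(* If g omega = c were finite, every g n would lie strictly below c, so c - 1
   would already bound the join g omega. *)
Lemma time_warp_last_Omega : is_last g Omega -> g Omega = Omega.
Proof.
  intros Hlast. pose proof (is_last_Omega_neq Hlast) as Hneq.
  destruct (g Omega) as [[|c]|] eqn:Hc; auto; exfalso.
  - exact (Hneq 0 time_warp0).
  - assert (Hbound : leo (g Omega) (Fin c)).
    { apply time_warp_Omega_le. intros n.
      apply lto_Fin_S. split.
      - rewrite <- Hc. apply time_warp_mono, leo_Omega.
      - exact (Hneq n). }
    rewrite Hc in Hbound. simpl in Hbound. lia.
Qed.

End TimeWarp.

Definition step_warp (n : nat) (k m : omegap) : omegap :=
  match m with
  | Fin p => if p <=? n then Fin 0 else k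
  | Omega => k
  end.

Lemma step_warp_above n k m : leo (Fin (S n)) m -> step_warp n k m = k.
Proof.
  destruct m as [p|]; simpl; auto.
  intros Hp. destruct (Nat.leb_spec p n); auto. lia.
Qed.

Lemma step_warp_below n k m : leo m (Fin n) -> step_warp n k m = Fin 0.
Proof.
  destruct m as [p|]; simpl; [|tauto].
  intros Hp. destruct (Nat.leb_spec p n); auto. lia.
Qed.

Lemma step_warp_le n k m : leo (step_warp n k m) k.
Proof.
  destruct (leo_Fin_or m n) as [Hm|Hm].
  - rewrite step_warp_below by exact Hm. apply leo0.
  - rewrite step_warp_above by exact Hm. apply leo_refl.
Qed.

(* The join of A lies above n+1 iff some element of A does. *)
Lemma step_warp_time_warp n k : time_warp (step_warp n k).
Proof.
  intros A x [Hub Hlub].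
  destruct (leo_Fin_or x n) as [Hx|Hx].
  - rewrite step_warp_below by exact Hx.
    split; [|intros; apply leo0].
    intros y [z [Az ->]].
    rewrite step_warp_below by exact (leo_trans _ _ _ (Hub z Az) Hx).
    apply leo_refl.
  - rewrite step_warp_above by exact Hx.
    split; [intros y [z [_ ->]]; apply step_warp_le|].
    intros z Hz.
    destruct (classic (exists y, A y /\ leo (Fin (S n)) y)) as [[y [Ay Hy]]|Hnone].
    + specialize (Hz _ (ex_intro _ y (conj Ay eq_refl))).
      rewrite step_warp_above in Hz; assumption.
    + exfalso.
      assert (Hxn : leo x (Fin n)).
      { apply Hlub. intros y Ay.
        destruct (leo_Fin_or y n) as [Hy|Hy]; [exact Hy|].
        exfalso. eauto. }
      pose proof (leo_trans _ _ _ Hx Hxn) as Habsurd. simpl in Habsurd. lia.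
Qed.

Section Star.

Variables f h : omegap -> omegap.
Hypothesis f_warp : time_warp f.
Hypothesis h_star : is_star f h.

Lemma star_time_warp : time_warp h.
Proof. apply h_star. Qed.

Lemma star_spec n : leo (f (h (Fin (S n)))) (Fin n).
Proof. apply h_star. Qed.

(* Maximality of f^star, tested against the step warp jumping from 0 to k at n+1. *)
Lemma star_ge k n : leo (f k) (Fin n) -> leo k (h (Fin (S n))).
Proof.
  intros Hk. destruct h_star as [_ [_ Hmax]].
  rewrite <- (step_warp_above n k (Fin (S n))) by (simpl; lia).
  apply Hmax; [apply step_warp_time_warp|].
  intros [p|]; [|apply leo_Omega].
  destruct (leo_Fin_or (Fin p) n) as [Hp|Hp].
  - rewrite step_warp_below by exact Hp. rewrite time_warp0 by exact f_warp. apply leo0.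
  - rewrite step_warp_above by exact Hp.
    destruct p as [|p]; simpl in Hp; [lia|].
    apply (leo_trans _ _ _ Hk). simpl in *. lia.
Qed.

Lemma star_le q n : leo (Fin (S n)) (f (Fin (S q))) -> leo (h (Fin (S n))) (Fin q).
Proof.
  intros Hq. destruct (leo_Fin_or (h (Fin (S n))) q) as [Hle|Hgt]; [exact Hle|].
  pose proof (leo_trans _ _ _ Hq
    (leo_trans _ _ _ (time_warp_mono f f_warp _ _ Hgt) (star_spec n))) as Habsurd.
  simpl in Habsurd. lia.
Qed.

Lemma star_eq j n :
  leo (f j) (Fin n) ->
  (forall q, j = Fin q -> leo (Fin (S n)) (f (Fin (S q)))) ->
  h (Fin (S n)) = j.
Proof.
  intros Hj Hsucc. apply leo_antisym; [|exact (star_ge j n Hj)].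
  destruct j as [q|]; [exact (star_le q n (Hsucc q eq_refl))|apply leo_Omega].
Qed.

Lemma star_Omega_le q : f (Fin (S q)) = Omega -> leo (h Omega) (Fin q).
Proof.
  intros Hq. apply (time_warp_Omega_le h star_time_warp). intros [|n].
  - rewrite (time_warp0 h star_time_warp). apply leo0.
  - apply star_le. rewrite Hq. apply leo_Omega.
Qed.

Lemma star_last_Omega : is_last f Omega -> is_last h Omega.
Proof.
  intros Hlast.
  pose proof (time_warp_last_Omega f f_warp Hlast) as f_Omega.
  assert (f_Fin : forall k, exists c, f (Fin k) = Fin c).
  { intros k. destruct (f (Fin k)) as [c|] eqn:Hk; eauto.
    exfalso. apply (is_last_Omega_neq f Hlast k). congruence. }
  assert (h_Fin : forall n, h (Fin n) <> Omega).
  { intros [|n] Hn.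
    - rewrite (time_warp0 h star_time_warp) in Hn. discriminate.
    - pose proof (star_spec n) as Hspec. rewrite Hn, f_Omega in Hspec. exact Hspec. }
  assert (h_Omega : h Omega = Omega).
  { destruct (h Omega) as [q|] eqn:Hq; auto. exfalso.
    destruct (f_Fin (S q)) as [c Hc].
    assert (Hge : leo (Fin (S q)) (h (Fin (S c))))
      by (apply star_ge; rewrite Hc; apply leo_refl).
    pose proof (time_warp_mono h star_time_warp _ _ (leo_Omega (Fin (S c)))) as Hmono.
    rewrite Hq in Hmono. pose proof (leo_trans _ _ _ Hge Hmono) as Habsurd.
    simpl in Habsurd. lia. }
  split; [reflexivity|].
  intros [k|] Hk; [|apply leo_refl].
  rewrite h_Omega in Hk. exfalso. exact (h_Fin k Hk).
Qed.

End Star.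

Section DiagramConditions.

Variables (D : sample -> Prop) (d : sample -> omegap).
Hypothesis Hd : diagram D d.

Lemma diagram_zero t a : D (SApp t a) -> D a -> d a = Fin 0 -> d (SApp t a) = Fin 0.
Proof. destruct Hd as (_ & H & _). apply H. Qed.

Lemma diagram_suc a : D (SSuc a) -> D a -> d (SSuc a) = succo (d a).
Proof. destruct Hd as (_ & _ & H & _). apply H. Qed.

Lemma diagram_last t a :
  D (SApp t a) -> D (SLast t) -> D a -> D (SApp t (SLast t)) ->
  leo (d (SLast t)) (d a) -> d (SApp t (SLast t)) = d (SApp t a).
Proof. destruct Hd as (_ & _ & _ & H & _). apply H. Qed.

Lemma diagram_last_Omega t :
  D (SLast t) -> D (SApp t (SLast t)) ->
  d (SLast t) = Omega -> d (SApp t (SLast t)) = Omega.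
Proof. destruct Hd as (_ & _ & _ & _ & H & _). apply H. Qed.

Lemma diagram_prime_lt t a :
  D (SApp (TPrime t) a) -> D a -> D (SApp t (SApp (TPrime t) a)) ->
  lto (Fin 0) (d a) -> lto (d a) Omega ->
  lto (d (SApp t (SApp (TPrime t) a))) (d a).
Proof. destruct Hd as (_ & _ & _ & _ & _ & _ & _ & _ & _ & H & _). apply H. Qed.

Lemma diagram_prime_suc t a :
  D (SApp (TPrime t) a) -> D a -> D (SApp t (SSuc (SApp (TPrime t) a))) ->
  lto (d (SApp (TPrime t) a)) Omega ->
  leo (d a) (d (SApp t (SSuc (SApp (TPrime t) a)))).
Proof. destruct Hd as (_ & _ & _ & _ & _ & _ & _ & _ & _ & _ & H & _). apply H. Qed.

Lemma diagram_last_prime t :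
  D (SLast (TPrime t)) -> D (SLast t) ->
  d (SLast (TPrime t)) = Omega -> d (SLast t) = Omega.
Proof. destruct Hd as (_ & _ & _ & _ & _ & _ & _ & _ & _ & _ & _ & H). apply H. Qed.

End DiagramConditions.

Section StarExtendsPrime.

Variables (D : sample -> Prop) (d : sample -> omegap) (t : term).
Variables f h : omegap -> omegap.
Hypothesis D_sat : saturated D.
Hypothesis Hd : diagram D d.
Hypothesis f_warp : time_warp f.
Hypothesis f_strong : strongly_extends D d t f.
Hypothesis h_star : is_star f h.

Local Notation t' := (TPrime t).

Lemma extends_app a : D (SApp t a) -> f (d a) = d (SApp t a).
Proof. intros Da. apply f_strong. exists a. auto. Qed.

Lemma prime_value_lt a n :
  D (SApp t' a) -> d a = Fin (S n) -> leo (f (d (SApp t' a))) (Fin n).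
Proof.
  intros Da Ha. pose proof (D_sat _ _ (ls_app _ _) Da) as Da0.
  pose proof (D_sat _ _ (ls_prime1 _ _) Da) as Dtt.
  rewrite extends_app by exact Dtt. apply lto_Fin_S. rewrite <- Ha.
  apply (diagram_prime_lt D d Hd _ _ Da Da0 Dtt); rewrite Ha;
    repeat split; simpl; try lia; discriminate.
Qed.

Lemma prime_value_succ a q :
  D (SApp t' a) -> d (SApp t' a) = Fin q -> leo (d a) (f (Fin (S q))).
Proof.
  intros Da Hq. pose proof (D_sat _ _ (ls_app _ _) Da) as Da0.
  pose proof (D_sat _ _ (ls_prime2 _ _) Da) as Dts.
  pose proof (D_sat _ _ (ls_app _ _) Dts) as Ds.
  replace (Fin (S q)) with (d (SSuc (SApp t' a)))
    by (rewrite (diagram_suc D d Hd) by assumption; rewrite Hq; reflexivity).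
  rewrite extends_app by exact Dts.
  apply (diagram_prime_suc D d Hd _ _ Da Da0 Dts).
  rewrite Hq. split; [exact I|discriminate].
Qed.

Lemma star_at_succ a n :
  D (SApp t' a) -> d a = Fin (S n) -> h (Fin (S n)) = d (SApp t' a).
Proof.
  intros Da Ha. apply (star_eq f h f_warp h_star).
  - exact (prime_value_lt a n Da Ha).
  - intros q Hq. rewrite <- Ha. exact (prime_value_succ a q Da Hq).
Qed.

(* Condition (12) turns last(t') = omega into last(t) = omega, and t[t'[a]]
   witnesses that D_t(delta) is nonempty. *)
Lemma star_last a :
  D (SApp t' a) -> d (SLast t') = Omega -> is_last h Omega.
Proof.
  intros Da Hlast.
  pose proof (D_sat _ _ (ls_prime1 _ _) Da) as Dtt.
  pose proof (D_sat _ _ (ls_last _ _) Dtt) as Dtl.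
  pose proof (D_sat _ _ (ls_app _ _) Dtl) as Dl.
  pose proof (D_sat _ _ (ls_last _ _) Da) as Dt'l.
  pose proof (D_sat _ _ (ls_app _ _) Dt'l) as Dl'.
  apply (star_last_Omega f h f_warp h_star).
  apply f_strong.
  - exists (d (SApp t' a)), (d (SApp t (SApp t' a))), (SApp t' a). auto.
  - exact (diagram_last_prime D d Hd t Dl' Dl Hlast).
Qed.

(* By (4), t'[a] and t'[last(t')] take the same value, which bounds h omega
   from below; (11) with delta(a) = omega bounds it from above. *)
Lemma star_at_Omega a :
  D (SApp t' a) -> d a = Omega -> h Omega = d (SApp t' a).
Proof.
  intros Da Ha.
  pose proof (D_sat _ _ (ls_app _ _) Da) as Da0.
  pose proof (D_sat _ _ (ls_last _ _) Da) as Dt'l.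
  pose proof (D_sat _ _ (ls_app _ _) Dt'l) as Dl'.
  assert (Hsame : d (SApp t' (SLast t')) = d (SApp t' a)).
  { apply (diagram_last D d Hd); auto. rewrite Ha. apply leo_Omega. }
  assert (Hlower : leo (d (SApp t' a)) (h Omega)).
  { rewrite <- Hsame.
    destruct (d (SLast t')) as [[|m]|] eqn:Hl.
    - rewrite (diagram_zero D d Hd) by assumption. apply leo0.
    - rewrite <- (star_at_succ _ m Dt'l Hl).
      apply (time_warp_mono h (star_time_warp f h h_star)), leo_Omega.
    - rewrite (diagram_last_Omega D d Hd) by assumption.
      rewrite (time_warp_last_Omega h (star_time_warp f h h_star) (star_last a Da Hl)).
      apply leo_refl. }
  destruct (d (SApp t' a)) as [q|] eqn:Hq.
  - apply leo_antisym; [|exact Hlower].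
    apply (star_Omega_le f h f_warp h_star), Omega_leo.
    rewrite <- Ha. exact (prime_value_succ a q Da Hq).
  - apply Omega_leo. exact Hlower.
Qed.

Lemma star_extends_prime : extends D d t' h.
Proof.
  intros i j [a [Da [-> ->]]].
  pose proof (D_sat _ _ (ls_app _ _) Da) as Da0.
  destruct (d a) as [[|n]|] eqn:Ha.
  - rewrite (time_warp0 h (star_time_warp f h h_star)).
    symmetry. exact (diagram_zero D d Hd _ _ Da Da0 Ha).
  - exact (star_at_succ a n Da Ha).
  - exact (star_at_Omega a Da Ha).
Qed.

End StarExtendsPrime.

Theorem lemma3p6 (D : sample -> Prop) (d : sample -> omegap) (t : term)
  (f h : omegap -> omegap) :
  finite_set D -> saturated D -> diagram D d ->
  time_warp f -> strongly_extends D d t f ->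
  is_star f h ->
  strongly_extends D d (TPrime t) h.
Proof.
  intros _ D_sat Hd f_warp f_strong h_star.
  split.
  - exact (star_extends_prime D d t f h D_sat Hd f_warp f_strong h_star).
  - intros [i [j [a [Da _]]]] Hlast.
    exact (star_last D d t f h D_sat Hd f_warp f_strong h_star a Da Hlast).
Qed.
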